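(* Let $R$ be an integral domain satisfying the irreducible intersection property, and let $p,q$ be prime ideals of $R$. Regarding $R_p$ and $R_q$ as subrings of $\mathrm{Frac}(R)$, the join $[R_p,R_q]$ is a local ring.
   Context: All rings are commutative with $1$. A ring $R$ satisfies the irreducible intersection property if for any prime ideals $p_1,p_2\subset R$, either $p_1+p_2=R$ or $p_1+p_2$ is a prime ideal. For subrings $A,B$ of a ring $K$, the join $[A,B]$ is the smallest subring of $K$ containing both $A$ and $B$. *)

From HB Require Import structures.
From mathcomp Require Import all_boot all_order all_algebra.
Set Implicit Arguments. Unset Strict Implicit. Unset Printing Implicit Defensive.
Import GRing.Theory.
Local Open Scope ring_scope.

Definition is_ideal (R : comNzRingType) (I : R -> Prop) : Prop :=
  [/\ I 0, (forall x y, I x -> I y -> I (x + y)), (forall x, I x -> I (- x))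
    & (forall r x, I x -> I (r * x))].

Definition is_prime_ideal (R : comNzRingType) (I : R -> Prop) : Prop :=
  [/\ is_ideal I, ~ I 1 & (forall x y, I (x * y) -> I x \/ I y)].

Definition ideal_add (R : comNzRingType) (I J : R -> Prop) : R -> Prop :=
  fun x => exists a b, [/\ I a, J b & x = a + b].

Definition is_whole (R : comNzRingType) (I : R -> Prop) : Prop := forall x, I x.

Definition irreducible_intersection_property (R : comNzRingType) : Prop :=
  forall p1 p2 : R -> Prop, is_prime_ideal p1 -> is_prime_ideal p2 ->
    is_whole (ideal_add p1 p2) \/ is_prime_ideal (ideal_add p1 p2).

Definition is_subring (K : comNzRingType) (S : K -> Prop) : Prop :=
  [/\ S 1, (forall x y, S x -> S y -> S (x - y)) & (forall x y, S x -> S y -> S (x * y))].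

Definition subring_join (K : comNzRingType) (A B : K -> Prop) : K -> Prop :=
  fun x => forall S : K -> Prop, is_subring S ->
    (forall a, A a -> S a) -> (forall b, B b -> S b) -> S x.

Definition is_ideal_of (K : comNzRingType) (S I : K -> Prop) : Prop :=
  [/\ forall x, I x -> S x, I 0, (forall x y, I x -> I y -> I (x - y))
    & (forall r x, S r -> I x -> I (r * x))].

Definition is_maximal_ideal_of (K : comNzRingType) (S M : K -> Prop) : Prop :=
  [/\ is_ideal_of S M, ~ M 1 &
      forall J, is_ideal_of S J -> ~ J 1 -> (forall x, M x -> J x) ->
        forall x, J x -> M x].

Definition is_local_subring (K : comNzRingType) (S : K -> Prop) : Prop :=
  exists M, is_maximal_ideal_of S M /\
    forall M', is_maximal_ideal_of S M' -> forall x, M' x <-> M x.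

Definition localization_in_frac (R : idomainType) (p : R -> Prop)
  : {fraction R} -> Prop :=
  fun x => exists a s : R, ~ p s /\
    x = FracField.tofrac a / FracField.tofrac s.

From mathcomp Require Import all_boot all_order all_algebra ring.
From mathcomp Require boolp classical_sets.
From Stdlib Require Import Classical.
Set Implicit Arguments. Unset Strict Implicit. Unset Printing Implicit Defensive.
Import GRing.Theory.
Local Open Scope ring_scope.

(* Let S be the multiplicative set (R \ p)(R \ q).  The join [R_p, R_q] is
   the localization S^-1 R = { a / s | s in S } inside Frac(R), and a
   fraction a / s is a unit there iff some multiple of a lies in S.  Hence
   S^-1 R is local as soon as the set of elements of R "avoiding S" (no
   multiple in S) is closed under addition, since its fractions are then an
   ideal containing every non-unit.
   By Zorn's lemma an element avoiding S lies in a prime ideal disjoint from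
   S, and for our S these are exactly the primes contained in p and q.  The
   irreducible intersection property makes the sum of two such primes again
   such a prime, which gives closure under addition. *)

Section Ideals.
Variable R : comNzRingType.
Implicit Types (I J P S T : R -> Prop) (a b x y : R).

Definition principal a : R -> Prop := fun z => exists c, z = c * a.

Lemma principal_ideal a : is_ideal (principal a).
Proof.
split; first by exists 0; rewrite mul0r.
- by move=> _ _ [c ->] [d ->]; exists (c + d); rewrite mulrDl.
- by move=> _ [c ->]; exists (- c); rewrite mulNr.
- by move=> r _ [c ->]; exists (r * c); rewrite mulrA.
Qed.

Lemma ideal_add_ideal I J : is_ideal I -> is_ideal J -> is_ideal (ideal_add I J).
Proof.
move=> [I0 ID IN IM] [J0 JD JN JM]; split; first by exists 0, 0; rewrite addr0.
- move=> _ _ [i [j [Ii Jj ->]]] [i' [j' [Ii' Jj' ->]]].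
  by exists (i + i'), (j + j'); split; [exact: ID|exact: JD|rewrite addrACA].
- move=> _ [i [j [Ii Jj ->]]].
  by exists (- i), (- j); split; [exact: IN|exact: JN|rewrite opprD].
- move=> r _ [i [j [Ii Jj ->]]].
  by exists (r * i), (r * j); split; [exact: IM|exact: JM|rewrite mulrDr].
Qed.

Lemma ideal_add_subl I J x : is_ideal J -> I x -> ideal_add I J x.
Proof. by case=> J0 _ _ _ Ix; exists x, 0; rewrite addr0. Qed.

Lemma ideal_add_subr I J x : is_ideal I -> J x -> ideal_add I J x.
Proof. by case=> I0 _ _ _ Jx; exists 0, x; rewrite add0r. Qed.

Definition multiplicative S := S 1 /\ forall x y, S x -> S y -> S (x * y).

Definition mulset S T : R -> Prop := fun u => exists s t, [/\ S s, T t & u = s * t].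

Lemma mulset_multiplicative S T :
  multiplicative S -> multiplicative T -> multiplicative (mulset S T).
Proof.
move=> [S1 SM] [T1 TM]; split; first by exists 1, 1; rewrite mulr1.
move=> _ _ [s [t [Ss Tt ->]]] [s' [t' [Ss' Tt' ->]]].
by exists (s * s'), (t * t'); split; [exact: SM|exact: TM|rewrite mulrACA].
Qed.

Lemma prime_compl_multiplicative P :
  is_prime_ideal P -> multiplicative (fun s => ~ P s).
Proof. by case=> _ P1 Pmul; split=> // x y Px Py /Pmul []. Qed.

Lemma prime_compl0 P : is_prime_ideal P -> ~ ~ P 0.
Proof. by case=> [[P0 _ _ _] _ _]; apply. Qed.

(* An element avoids S if none of its multiples lies in S; these are the
   numerators of the non-units of the localization at S. *)
Definition avoids S a := forall b, ~ S (a * b).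

Lemma avoidsM S c a : avoids S a -> avoids S (c * a).
Proof. by move=> aS b; rewrite -mulrA mulrCA; exact: aS. Qed.

Lemma avoids_of_ideal S P a :
  is_ideal P -> (forall s, S s -> ~ P s) -> P a -> avoids S a.
Proof. by case=> _ _ _ PM PS Pa b /PS; apply; rewrite mulrC; exact: PM. Qed.

Definition avoiding_ideal S a I := [/\ is_ideal I, I a & forall s, S s -> ~ I s].

Lemma avoiding_chain_union S a (F : (R -> Prop) -> Prop) I0 x0 :
  (forall I x, F I -> I x -> avoiding_ideal S a I) ->
  classical_sets.total_on F classical_sets.subset -> F I0 -> I0 x0 ->
  avoiding_ideal S a (fun x => exists2 I, F I & I x).
Proof.
move=> Fav Ftot FI0 I0x0.
have [[I00 _ _ _] I0a _] := Fav _ _ FI0 I0x0.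
split; [split| |].
- by exists I0.
- move=> x y [X FX Xx] [Y FY Yy].
  have [XY|YX] := Ftot X Y FX FY.
  + have [[_ YD _ _] _ _] := Fav _ _ FY Yy; exists Y => //; exact: YD (XY _ Xx) Yy.
  + have [[_ XD _ _] _ _] := Fav _ _ FX Xx; exists X => //; exact: XD Xx (YX _ Yy).
- move=> x [X FX Xx]; have [[_ _ XN _] _ _] := Fav _ _ FX Xx.
  by exists X => //; exact: XN.
- move=> r x [X FX Xx]; have [[_ _ _ XM] _ _] := Fav _ _ FX Xx.
  by exists X => //; exact: XM.
- by exists I0.
- by move=> s Ss [X FX Xs]; have [_ _ XS] := Fav _ _ FX Xs; exact: XS Ss Xs.
Qed.

(* Zorn's lemma: if a avoids S, there is a maximal avoiding ideal.  Zorn is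
   applied to the avoiding ideals together with the empty set, so that the
   empty chain has an upper bound. *)
Lemma maximal_avoiding_ideal S a : avoids S a ->
  exists2 I, avoiding_ideal S a I &
    forall J, avoiding_ideal S a J -> (forall x, I x -> J x) -> forall x, J x -> I x.
Proof.
move=> aS.
pose family I := (forall x, ~ I x) \/ avoiding_ideal S a I.
have [I [famI maxI]] :
    exists I, family I /\ forall J, classical_sets.proper I J -> ~ family J.
  apply: classical_sets.Zorn_bigcup => F Ffam Ftot.
  have [[I0 [x0 [FI0 I0x0]]]|none] := classic (exists I x, F I /\ I x).
  - right; apply: (avoiding_chain_union _ Ftot FI0 I0x0) => I x FI Ix.
    by case: (Ffam I FI) => // /(_ x).
  - by left=> x [I FI Ix]; apply: none; exists I, x.
have Ra_avoiding : avoiding_ideal S a (principal a).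
  split; [exact: principal_ideal|by exists 1; rewrite mul1r|].
  by move=> s Ss [c Ec]; apply: (aS c); rewrite mulrC -Ec.
have avI : avoiding_ideal S a I.
  case: famI => // Iempty; exfalso; apply: (maxI (principal a)); last by right.
  split; first by move=> x /Iempty.
  by move=> /(_ a) Ia; apply: (Iempty a); apply: Ia; exists 1; rewrite mul1r.
exists I => // J avJ IJ x Jx; apply: NNPP => Ix.
by apply: (maxI J); [split=> // /(_ x Jx)|right].
Qed.

(* A maximal avoiding ideal is prime: if x, y lie outside it, enlarging it by
   x (resp. y) meets S, and the product of the two witnesses lies both in S
   and in the ideal. *)
Lemma maximal_avoiding_prime S a I : multiplicative S -> avoiding_ideal S a I ->
  (forall J, avoiding_ideal S a J -> (forall x, I x -> J x) -> forall x, J x -> I x) ->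
  is_prime_ideal I.
Proof.
move=> [S1 SM] [idI Ia IS] maxI.
have meets x : ~ I x -> exists2 u, S u & ideal_add I (principal x) u.
  move=> Ix; apply: NNPP => none; apply: Ix.
  have idJ := ideal_add_ideal idI (principal_ideal x).
  apply: (maxI (ideal_add I (principal x))).
  - split=> //; first exact: ideal_add_subl (principal_ideal x) Ia.
    by move=> s Ss Js; apply: none; exists s.
  - by move=> y; exact: ideal_add_subl (principal_ideal x).
  - by apply: ideal_add_subr => //; exists 1; rewrite mul1r.
split=> //; first by move/(IS 1 S1).
move=> x y Ixy; apply: NNPP => /not_or_and [Ix Iy].
have [u Su [i [_ [Ii [c ->] Eu]]]] := meets x Ix.
have [v Sv [j [_ [Ij [d ->] Ev]]]] := meets y Iy.
case: idI => _ ID _ IM.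
apply: (IS (u * v)); first exact: SM.
have -> : u * v = u * j + (d * y) * i + (c * d) * (x * y) by rewrite Eu Ev; ring.
by apply: (ID _ _ (ID _ _ _ _)); apply: IM.
Qed.

Lemma prime_of_avoids S a : multiplicative S -> avoids S a ->
  exists P, [/\ is_prime_ideal P, P a & forall s, S s -> ~ P s].
Proof.
move=> mulS /maximal_avoiding_ideal [I avI maxI].
by exists I; case: (avI) => _ Ia IS; split=> //; exact: maximal_avoiding_prime maxI.
Qed.

End Ideals.

(* A ring whose non-units form a proper ideal M is local with maximal ideal M:
   every proper ideal lies inside M. *)
Lemma local_of_nonunits_ideal (K : comNzRingType) (A M : K -> Prop) :
  is_ideal_of A M -> ~ M 1 -> (forall x, A x -> ~ M x -> exists2 y, A y & x * y = 1) ->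
  is_local_subring A.
Proof.
move=> idM M1 units.
have proper_sub J : is_ideal_of A J -> ~ J 1 -> forall x, J x -> M x.
  move=> [JA _ _ JM] J1 x Jx; apply: NNPP => Mx.
  have [y Ay xy] := units x (JA x Jx) Mx.
  by apply: J1; rewrite -xy mulrC; exact: JM.
have maxM : is_maximal_ideal_of A M by split=> // J idJ J1 _; exact: proper_sub.
exists M; split=> // M' [idM' M'1 maxM'] x; split; first exact: proper_sub.
by apply: maxM' => //; exact: proper_sub.
Qed.

Local Notation "x %:F" := (@FracField.tofrac _ x).

Section Localization.
Variable R : idomainType.
Implicit Types (S T : R -> Prop) (a b s t : R) (x y : {fraction R}).

(* The localization S^-1 R as a subset of Frac(R); for S the complement of a
   prime p this is localization_in_frac p. *)
Definition frac_over S x := exists a s, S s /\ x = a%:F / s%:F.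

Lemma tofrac_neq0 S s : ~ S 0 -> S s -> s%:F != 0.
Proof. by move=> S0 Ss; rewrite tofrac_eq0; apply/eqP => s0; apply: S0; rewrite -s0. Qed.

Lemma frac_sub a b s t : s%:F != 0 -> t%:F != 0 ->
  a%:F / s%:F - b%:F / t%:F = (a * t - b * s)%:F / (s * t)%:F.
Proof.
by move=> s0 t0; rewrite -mulNr -tofracN addf_div // -!tofracM -tofracD mulNr.
Qed.

Lemma frac_mul a b s t : a%:F / s%:F * (b%:F / t%:F) = (a * b)%:F / (s * t)%:F.
Proof. by rewrite mulf_div -!tofracM. Qed.

Lemma mulset_neq0 S T : ~ S 0 -> ~ T 0 -> ~ mulset S T 0.
Proof.
move=> S0 T0 [s [t [Ss Tt /esym/eqP]]].
rewrite mulf_eq0 => /orP [/eqP s0|/eqP t0].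
- by apply: S0; rewrite -s0.
- by apply: T0; rewrite -t0.
Qed.

Lemma frac_over_subring S : multiplicative S -> ~ S 0 -> is_subring (frac_over S).
Proof.
move=> [S1 SM] S0; split; first by exists 1, 1; rewrite tofrac1 divr1.
- move=> _ _ [a [s [Ss ->]]] [b [t [St ->]]].
  exists (a * t - b * s), (s * t); split; first exact: SM.
  by rewrite frac_sub // (tofrac_neq0 S0).
- move=> _ _ [a [s [Ss ->]]] [b [t [St ->]]].
  by exists (a * b), (s * t); split; [exact: SM|exact: frac_mul].
Qed.

(* The join of S^-1 R and T^-1 R is (ST)^-1 R, since a / (st) = (a / s)(1 / t). *)
Lemma join_frac_over S T : multiplicative S -> multiplicative T -> ~ S 0 -> ~ T 0 ->
  subring_join (frac_over S) (frac_over T) = frac_over (mulset S T).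
Proof.
move=> mulS mulT S0 T0; apply: boolp.funext => x; apply: boolp.propext; split.
- move=> joinx; apply: joinx.
  + exact: frac_over_subring (mulset_multiplicative mulS mulT) (mulset_neq0 S0 T0).
  + move=> _ [a [s [Ss ->]]]; exists a, s; split=> //.
    by exists s, 1; rewrite mulr1; case: mulT.
  + move=> _ [a [t [Tt ->]]]; exists a, t; split=> //.
    by exists 1, t; rewrite mul1r; case: mulS.
- move=> [a [_ [[s [t [Ss Tt ->]]] ->]]] U [_ _ UM] US UT.
  rewrite -[a]mulr1 -frac_mul; apply: UM; [apply: US|apply: UT].
  + by exists a, s.
  + by exists 1, t.
Qed.

(* Fractions whose numerator avoids S: the candidate maximal ideal. *)
Definition nonunit_frac S x := exists a s, [/\ S s, avoids S a & x = a%:F / s%:F].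

Lemma frac_unit S a s : ~ S 0 -> S s -> ~ avoids S a ->
  exists2 y, frac_over S y & a%:F / s%:F * y = 1.
Proof.
move=> S0 Ss /not_all_ex_not [b /NNPP Sab].
exists ((b * s)%:F / (a * b)%:F); first by exists (b * s), (a * b).
by rewrite frac_mul [s * _]mulrC mulrA tofracM divff // mulf_neq0 ?(tofrac_neq0 S0).
Qed.

Section LocalCriterion.
Variable S : R -> Prop.
Hypotheses (mulS : multiplicative S) (S0 : ~ S 0).
Hypothesis avoidsD : forall a b, avoids S a -> avoids S b -> avoids S (a + b).

Lemma nonunit_frac_ideal : is_ideal_of (frac_over S) (nonunit_frac S).
Proof.
have [S1 SM] := mulS.
split.
- by move=> _ [a [s [Ss _ ->]]]; exists a, s.
- exists 0, 1; split=> //; last by rewrite tofrac0 mul0r.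
  by move=> b; rewrite mul0r.
- move=> _ _ [a [s [Ss aS ->]]] [b [t [St bS ->]]].
  exists (a * t - b * s), (s * t); split; first exact: SM.
  + by apply: avoidsD; rewrite mulrC; [|rewrite -mulNr]; exact: avoidsM.
  + exact: frac_sub (tofrac_neq0 S0 Ss) (tofrac_neq0 S0 St).
- move=> _ _ [c [t [St ->]]] [a [s [Ss aS ->]]].
  by exists (c * a), (t * s); split; [exact: SM|exact: avoidsM|exact: frac_mul].
Qed.

Lemma local_frac_over : is_local_subring (frac_over S).
Proof.
apply: (local_of_nonunits_ideal nonunit_frac_ideal).
- move=> [a [s [Ss aS E]]].
  have : a%:F = s%:F by rewrite -[s%:F]mul1r E divfK // (tofrac_neq0 S0).
  by move/eqP; rewrite tofrac_eq => /eqP as_eq; apply: (aS 1); rewrite mulr1 as_eq.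
- move=> _ [a [s [Ss ->]]] Mx; apply: frac_unit => // aS.
  by apply: Mx; exists a, s.
Qed.

End LocalCriterion.
End Localization.

Section PrimesBelow.
Variable R : comNzRingType.
Variables p q : R -> Prop.
Hypotheses (hp : is_prime_ideal p) (hq : is_prime_ideal q).

Let S := mulset (fun s => ~ p s) (fun t => ~ q t).

Lemma compl_mulset_multiplicative : multiplicative S.
Proof. by apply: mulset_multiplicative; exact: prime_compl_multiplicative. Qed.

Lemma disjoint_compl_mulset_sub P :
  (forall u, S u -> ~ P u) -> forall x, P x -> p x /\ q x.
Proof.
have [[_ p1 _] [_ q1 _]] := (hp, hq).
move=> PS x Px; split; apply: NNPP => nx; apply: (PS x) => //.
- by exists x, 1; rewrite mulr1.
- by exists 1, x; rewrite mul1r.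
Qed.

Lemma sub_compl_mulset_disjoint P : is_prime_ideal P ->
  (forall x, P x -> p x /\ q x) -> forall u, S u -> ~ P u.
Proof.
move=> [_ _ Pmul] Ppq _ [s [t [ps qt ->]]] /Pmul [/Ppq [] //|/Ppq [] //].
Qed.

Lemma compl_mulset_avoidsD : irreducible_intersection_property R ->
  forall a b, avoids S a -> avoids S b -> avoids S (a + b).
Proof.
move=> hIIP a b aS bS.
have [P1 [prP1 P1a P1S]] := prime_of_avoids compl_mulset_multiplicative aS.
have [P2 [prP2 P2b P2S]] := prime_of_avoids compl_mulset_multiplicative bS.
have [[[_ pD _ _] p1 _] [[_ qD _ _] q1 _]] := (hp, hq).
have below x : ideal_add P1 P2 x -> p x /\ q x.
  move=> [y [z [P1y P2z ->]]].
  have [py qy] := disjoint_compl_mulset_sub P1S P1y.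
  have [pz qz] := disjoint_compl_mulset_sub P2S P2z.
  by split; [exact: pD|exact: qD].
have prP : is_prime_ideal (ideal_add P1 P2).
  by case: (hIIP _ _ prP1 prP2) => // /(_ 1) /below [].
apply: (avoids_of_ideal (P := ideal_add P1 P2)); first by case: prP.
- exact: sub_compl_mulset_disjoint.
- by exists a, b.
Qed.

End PrimesBelow.

Theorem mainTheorem7 (R : idomainType)
  (hIIP : irreducible_intersection_property R)
  (p q : R -> Prop) (hp : is_prime_ideal p) (hq : is_prime_ideal q) :
  is_local_subring (subring_join (localization_in_frac p) (localization_in_frac q)).
Proof.
have [mulp mulq] := (prime_compl_multiplicative hp, prime_compl_multiplicative hq).
change (is_local_subring (subring_join (frac_over (fun s => ~ p s))
                                       (frac_over (fun t => ~ q t)))).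
rewrite (join_frac_over mulp mulq (prime_compl0 hp) (prime_compl0 hq)).
apply: local_frac_over.
- exact: compl_mulset_multiplicative.
- exact: mulset_neq0 (prime_compl0 hp) (prime_compl0 hq).
- exact: compl_mulset_avoidsD.
Qed.
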